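(* Let $G$ be the $m\times n$ grid with $m,n\ge 2$, let $1\le z\le n$, and let $(a,b)$ be a vertex. The set $Y=\{(1,z),(m,z),(a,b)\}$ is a minimal landmark set of $G$ if and only if $b\neq z$ and $z\notin\{1,n\}$.
   Context: The $m\times n$ grid $G$ has vertex set $V=\{(i,j):1\le i\le m,\ 1\le j\le n\}$, with $(i_1,j_1),(i_2,j_2)$ adjacent iff $|i_1-i_2|+|j_1-j_2|=1$; thus $d((i_1,j_1),(i_2,j_2))=|i_1-i_2|+|j_1-j_2|$. A vertex $x$ separates $u,v$ if $d(x,u)\neq d(x,v)$. A landmark set is $L\subseteq V$ such that every pair of distinct vertices is separated by some vertex of $L$; it is minimal if no proper subset is a landmark set. *)

From mathcomp Require Import all_boot.
Set Implicit Arguments. Unset Strict Implicit. Unset Printing Implicit Defensive.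

Definition vtx := (nat * nat)%type.

Definition in_grid (m n : nat) (p : vtx) : Prop :=
  (1 <= p.1 <= m) /\ (1 <= p.2 <= n).

Definition absdiff (a b : nat) : nat := (a - b) + (b - a).

Definition gdist (p q : vtx) : nat := absdiff p.1 q.1 + absdiff p.2 q.2.

Definition separates (x u v : vtx) : Prop := gdist x u <> gdist x v.

Definition landmark (m n : nat) (L : vtx -> Prop) : Prop :=
  (forall x, L x -> in_grid m n x) /\
  (forall u v, in_grid m n u -> in_grid m n v -> u <> v ->
     exists x, L x /\ separates x u v).

Definition minimal_landmark (m n : nat) (L : vtx -> Prop) : Prop :=
  landmark m n L /\
  (forall S : vtx -> Prop, (forall x, S x -> L x) -> landmark m n S ->
     forall x, L x -> S x).

(* The two column ends (1,z) and (m,z) determine the row of a vertex and its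
   distance |z - j| to column z, so only the mirror pairs (i, j), (i, 2z - j)
   remain unresolved; a third landmark off column z separates them, and one on
   column z does not.  When z is 1 or n there are no mirror pairs, so the two
   ends already form a landmark set.  Minimality holds because for any two of
   the three landmarks there are two neighbouring vertices at equal distance
   from both, so none of the three can be dropped. *)
From mathcomp Require Import all_boot zify.
From Stdlib Require Import Classical.

Set Implicit Arguments.
Unset Strict Implicit.

Definition column_ends_with (m z : nat) (c : vtx) (p : vtx) : Prop :=
  p = (1, z) \/ p = (m, z) \/ p = c.

Definition twin_pair (m n : nat) (P Q : vtx) : Prop :=
  exists u v, in_grid m n u /\ in_grid m n v /\ u <> v /\
    gdist P u = gdist P v /\ gdist Q u = gdist Q v.

Lemma in_grid_intro m n i j :
  1 <= i -> i <= m -> 1 <= j -> j <= n -> in_grid m n (i, j).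
Proof. by move=> *; split; apply/andP. Qed.

Lemma landmarkP m n (L : vtx -> Prop) :
  (forall x, L x -> in_grid m n x) ->
  (forall u v, in_grid m n u -> in_grid m n v ->
     (forall x, L x -> gdist x u = gdist x v) -> u = v) ->
  landmark m n L.
Proof.
move=> HL Htw; split=> // u v gu gv uv.
apply: NNPP => nsep; apply: uv; apply: Htw => // x Lx.
by apply: NNPP => ne; apply: nsep; exists x.
Qed.

Lemma landmark_twins m n (L : vtx -> Prop) u v :
  landmark m n L -> in_grid m n u -> in_grid m n v ->
  (forall x, L x -> gdist x u = gdist x v) -> u = v.
Proof.
move=> [_ Hsep] gu gv Htw; apply: NNPP => uv.
by have [x [Lx]] := Hsep u v gu gv uv; apply; apply: Htw.
Qed.

Lemma landmark_subset3_mem m n (S : vtx -> Prop) x P Q :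
  (forall y, S y -> y = x \/ y = P \/ y = Q) -> landmark m n S ->
  twin_pair m n P Q -> S x.
Proof.
move=> HS [_ Hsep] [u [v [gu [gv [uv [eP eQ]]]]]].
have [y [Sy]] := Hsep u v gu gv uv.
by case: (HS y Sy) => [<-|[->|->]].
Qed.

Lemma gdist_column_ends_eq m z i j k l :
  1 <= i <= m -> 1 <= k <= m ->
  gdist (1, z) (i, j) = gdist (1, z) (k, l) ->
  gdist (m, z) (i, j) = gdist (m, z) (k, l) ->
  i = k /\ absdiff z j = absdiff z l.
Proof. by rewrite /gdist /absdiff /= => /andP[? ?] /andP[? ?]; lia. Qed.

Lemma landmark_boundary_column_ends m n z :
  1 <= m -> 1 <= n -> z = 1 \/ z = n ->
  landmark m n (fun p => p = (1, z) \/ p = (m, z)).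
Proof.
move=> hm hn hz; apply: landmarkP => [x [->|->]|[i j] [k l] gu gv Htw].
  1,2: by apply: in_grid_intro; lia.
move: gu gv; rewrite /in_grid /= => -[gi gj] [gk gl].
have [<- e] := gdist_column_ends_eq gi gk (Htw _ (or_introl erefl))
  (Htw _ (or_intror erefl)).
by move: gj gl e; rewrite /absdiff /= => /andP[? ?] /andP[? ?] ?; congr pair; lia.
Qed.

Lemma column_not_landmark m n z (L : vtx -> Prop) :
  1 <= m -> 1 < z < n -> (forall x, L x -> x.2 = z) -> ~ landmark m n L.
Proof.
move=> hm /andP[hz1 hzn] HL Hl.
have twins : (1, z.-1) = (1, z.+1) :> vtx.
  apply: (landmark_twins Hl); [apply: in_grid_intro; lia..|].
  by move=> [i j] /HL /= ->; rewrite /gdist /absdiff /=; lia.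
by case: twins; lia.
Qed.

Lemma landmark_column_ends_with m n z a b :
  1 <= z <= n -> in_grid m n (a, b) -> b <> z ->
  landmark m n (column_ends_with m z (a, b)).
Proof.
move=> /andP[hz1 hzn] gab hbz; have [/= /andP[ha1 ha2] /andP[hb1 hb2]] := gab.
apply: landmarkP => [x [->|[->|->]] //|[i j] [k l] gu gv Htw].
  1,2: by apply: in_grid_intro; lia.
move: gu gv; rewrite /in_grid /= => -[gi gj] [gk gl].
have [ik ejl] := gdist_column_ends_eq gi gk (Htw _ (or_introl erefl))
  (Htw _ (or_intror (or_introl erefl))).
have := Htw _ (or_intror (or_intror erefl)).
(* |z - j| = |z - l| and |b - j| = |b - l| with j <> l force b = z. *)
by subst k; move: ejl; rewrite /gdist /absdiff /= => ? ?; congr pair; lia.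
Qed.

Ltac solve_twin_pair :=
  split; [apply: in_grid_intro; lia|]; split; [apply: in_grid_intro; lia|];
  split; [case=> *; lia|]; rewrite /gdist /absdiff /=; split; lia.

Lemma twin_pair_bottom_end m n z a b :
  2 <= m -> 1 < z < n -> in_grid m n (a, b) -> b <> z -> twin_pair m n (m, z) (a, b).
Proof.
move=> hm /andP[hz1 hzn] [/= /andP[ha1 ha2] /andP[hb1 hb2]] hbz.
have [hb|hb] : b < z \/ z < b by lia.
- have [ha|ha] : a < m \/ a = m by lia.
  + by exists (a.+1, b), (a, b.+1); solve_twin_pair.
  + by exists (a, z.+1), (a.-1, z); solve_twin_pair.
- have [ha|ha] : a < m \/ a = m by lia.
  + by exists (a.+1, b), (a, b.-1); solve_twin_pair.
  + by exists (a, z.-1), (a.-1, z); solve_twin_pair.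
Qed.

Lemma twin_pair_top_end m n z a b :
  2 <= m -> 1 < z < n -> in_grid m n (a, b) -> b <> z -> twin_pair m n (1, z) (a, b).
Proof.
move=> hm /andP[hz1 hzn] [/= /andP[ha1 ha2] /andP[hb1 hb2]] hbz.
have [hb|hb] : b < z \/ z < b by lia.
- have [ha|ha] : 1 < a \/ a = 1 by lia.
  + by exists (a.-1, b), (a, b.+1); solve_twin_pair.
  + by exists (a, z.+1), (a.+1, z); solve_twin_pair.
- have [ha|ha] : 1 < a \/ a = 1 by lia.
  + by exists (a.-1, b), (a, b.-1); solve_twin_pair.
  + by exists (a, z.-1), (a.+1, z); solve_twin_pair.
Qed.

Lemma twin_pair_column_ends m n z :
  1 <= m -> 1 < z < n -> twin_pair m n (1, z) (m, z).
Proof. by move=> hm /andP[hz1 hzn]; exists (1, z.-1), (1, z.+1); solve_twin_pair. Qed.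

Theorem mainTheorem15 (m n z a b : nat) :
  2 <= m -> 2 <= n -> 1 <= z <= n -> in_grid m n (a, b) ->
  (a, b) <> (1, z) -> (a, b) <> (m, z) ->
  (minimal_landmark m n (fun p => p = (1, z) \/ p = (m, z) \/ p = (a, b))
   <-> (b <> z /\ z <> 1 /\ z <> n)).
Proof.
move=> hm hn hz gab n1 n2; split.
- move=> [HY Hmin].
  have [hz1' hzn'] : z <> 1 /\ z <> n.
    suff not_boundary : ~ (z = 1 \/ z = n).
      by split=> ez; apply: not_boundary; [left|right].
    move=> /(landmark_boundary_column_ends (ltnW hm) (ltnW hn)) Hends.
    have [] := Hmin _ _ Hends (a, b) (or_intror (or_intror erefl)) => //.
    by move=> p [->|->]; [left|right; left].
  split=> // ebz; apply: (column_not_landmark (z := z) (ltnW hm) _ _ HY) => [|x].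
    by case/andP: hz => *; apply/andP; lia.
  by rewrite -ebz => -[->|[->|->]].
- move=> [hbz [hz1 hzn]].
  have hz' : 1 < z < n by case/andP: hz => *; apply/andP; lia.
  split=> [|S HS HSl x [->|[->|->]]]; first exact: landmark_column_ends_with.
  + by apply: (landmark_subset3_mem _ HSl (twin_pair_bottom_end hm hz' gab hbz)).
  + apply: (landmark_subset3_mem _ HSl (twin_pair_top_end hm hz' gab hbz)) => y /HS.
    by move=> [->|[->|->]]; [right; left|left|right; right].
  + apply: (landmark_subset3_mem _ HSl (twin_pair_column_ends (ltnW hm) hz')) => y /HS.
    by move=> [->|[->|->]]; [right; left|right; right|left].
Qed.
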